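(* Let $\bar\alpha\in[0,1]$ and $n\ge 1$. Every maximizer $\boldsymbol{\alpha}^*=(\alpha^*_1,\dots,\alpha^*_n)\in[0,1]^n$ of the problem $$\max_{\boldsymbol{\alpha}\in[0,1]^n} C(\boldsymbol{\alpha})\quad\text{subject to}\quad G(\boldsymbol{\alpha})=0$$ has at most one index $i$ with $\alpha^*_i\in(0,1)$.
   Context: Model of a road with $n\ge1$ parallel lanes of common length $d>0$. Vehicles have length $L>0$. A vehicle keeps a headway (space gap) $\bar h$ to the vehicle in front of it if both it and the vehicle in front are autonomous, and headway $h$ otherwise, where $0\le \bar h<h$. Vehicle types within a lane are i.i.d. Bernoulli: each vehicle in lane $i$ is autonomous with probability $\alpha_i\in[0,1]$ (the lane's autonomy level). Set $k_1=(L+h)/d$ and $k_2=(h-\bar h)/d$, so $k_1>k_2>0$ and $k_1-k_2=(L+\bar h)/d>0$. The capacity of a lane with autonomy level $\alpha\in[0,1]$ is $$c(\alpha)=\frac{1}{k_1-k_2\alpha^2}=\frac{d}{L+h-(h-\bar h)\alpha^2}.$$ Let $\bar\alpha\in[0,1]$ be the overall fraction of autonomous vehicles on the road. For $\boldsymbol{\alpha}=(\alpha_1,\dots,\alpha_n)\in[0,1]^n$ define $C(\boldsymbol{\alpha})=\sum_{i=1}^n c(\alpha_i)$ (total capacity) and $G(\boldsymbol{\alpha})=\sum_{i=1}^n(\alpha_i-\bar\alpha)c(\alpha_i)$; the constraint $G(\boldsymbol{\alpha})=0$ expresses that the overall autonomy level equals $\bar\alpha$. *)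

From HB Require Import structures.
From mathcomp Require Import all_boot all_order all_algebra.
Set Implicit Arguments. Unset Strict Implicit. Unset Printing Implicit Defensive.
Import Order.TTheory GRing.Theory Num.Theory.
Local Open Scope ring_scope.

(* capacity of one lane with autonomy level a :
   c(a) = d / (L + h - (h - hbar) a^2) *)
Definition cap (R : realFieldType) (d L h hbar a : R) : R :=
  d / (L + h - (h - hbar) * a ^+ 2).

Definition Ctot (R : realFieldType) (n : nat) (d L h hbar : R) (al : 'I_n -> R) : R :=
  \sum_(i < n) cap d L h hbar (al i).

Definition Gcon (R : realFieldType) (n : nat) (d L h hbar abar : R) (al : 'I_n -> R) : R :=
  \sum_(i < n) (al i - abar) * cap d L h hbar (al i).

Definition feasible (R : realFieldType) (n : nat) (d L h hbar abar : R) (al : 'I_n -> R) : Prop :=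
  (forall i, 0 <= al i <= 1) /\ Gcon d L h hbar abar al = 0.

Definition is_maximizer (R : realFieldType) (n : nat) (d L h hbar abar : R) (al : 'I_n -> R) : Prop :=
  feasible d L h hbar abar al /\
  (forall be : 'I_n -> R, feasible d L h hbar abar be ->
     Ctot d L h hbar be <= Ctot d L h hbar al).

From HB Require Import structures.
From mathcomp Require Import all_boot all_order all_algebra.
From mathcomp Require Import ring lra.
Import Order.TTheory GRing.Theory Num.Theory.
Set Implicit Arguments. Unset Strict Implicit.
Local Open Scope ring_scope.

(* Write A = L + h, B = h - hbar, so c(b) = d / (A - B b^2), and parametrize a
   lane by its load w = (b - abar) c(b), its contribution to G.  On [0,1] the
   load is strictly increasing in b, and solving the quadratic relation between
   c and w gives c = (d + 2 B abar w + sqrt Q(w)) / (2 (A - B abar^2)) with Q a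
   positive definite quadratic, so c is a strictly convex function of w.  Two
   interior lanes can therefore be pushed apart, keeping their total load (hence
   G = 0) while strictly increasing the total capacity. *)

Section SqrtQuadratic.
Variables (R : rcfType) (p q r : R).
Hypotheses (p_gt0 : 0 < p) (disc_gt0 : 0 < 4 * p * r - q ^+ 2).

Definition quad (w : R) := p * w ^+ 2 + q * w + r.

Lemma quad_gt0 (w : R) : 0 < quad w.
Proof.
have h4 : 0 < 4 * p * quad w.
  have -> : 4 * p * quad w = (2 * p * w + q) ^+ 2 + (4 * p * r - q ^+ 2).
    by rewrite /quad; ring.
  by apply: ltr_wpDl; [exact: sqr_ge0|].
by rewrite pmulr_rgt0 // in h4; apply: mulr_gt0 => //; lra.
Qed.

Lemma sqrt_quad_strict_convex (x y lam : R) : x != y -> 0 < lam < 1 ->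
  Num.sqrt (quad (lam * x + (1 - lam) * y))
    < lam * Num.sqrt (quad x) + (1 - lam) * Num.sqrt (quad y).
Proof.
move=> nxy /andP[lam_gt0 lam_lt1].
set Bxy := p * x * y + q * (x + y) / 2 + r.
have Bxy_lt : Bxy < Num.sqrt (quad x) * Num.sqrt (quad y).
  rewrite -sqrtrM; last exact: ltW (quad_gt0 x).
  have Qxy_gt0 : 0 < quad x * quad y by apply: mulr_gt0; apply: quad_gt0.
  have [Bxy_le0 | Bxy_gt0] := leP Bxy 0.
    by apply: le_lt_trans Bxy_le0 _; rewrite sqrtr_gt0.
  rewrite -(ger0_norm (ltW Bxy_gt0)) -sqrtr_sqr ltr_sqrt //.
  have -> : quad x * quad y = Bxy ^+ 2 + (4 * p * r - q ^+ 2) / 4 * (x - y) ^+ 2.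
    by rewrite /quad /Bxy; field.
  rewrite ltrDl; apply: mulr_gt0; first by apply: divr_gt0 => //; lra.
  by rewrite lt_neqAle eq_sym sqrf_eq0 subr_eq0 nxy sqr_ge0.
set M := lam * Num.sqrt (quad x) + (1 - lam) * Num.sqrt (quad y).
have M_gt0 : 0 < M.
  apply: ltr_pwDl; first by apply: mulr_gt0 => //; rewrite sqrtr_gt0 quad_gt0.
  by apply: mulr_ge0; [lra | exact: sqrtr_ge0].
rewrite -(ger0_norm (ltW M_gt0)) -sqrtr_sqr ltr_sqrt; last by rewrite exprn_gt0.
have -> : quad (lam * x + (1 - lam) * y)
    = lam ^+ 2 * quad x + (1 - lam) ^+ 2 * quad y + 2 * lam * (1 - lam) * Bxy.
  by rewrite /quad /Bxy; field.
have -> : M ^+ 2 = lam ^+ 2 * quad x + (1 - lam) ^+ 2 * quad y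
    + 2 * lam * (1 - lam) * (Num.sqrt (quad x) * Num.sqrt (quad y)).
  move: (sqr_sqrtr (ltW (quad_gt0 x))) (sqr_sqrtr (ltW (quad_gt0 y))).
  rewrite /M; set sx := Num.sqrt _; set sy := Num.sqrt _.
  by move=> <- <-; ring.
by rewrite ltrD2l ltr_pM2l //; apply: mulr_gt0; [apply: mulr_gt0 => // | lra].
Qed.

Lemma sqrt_quad_spread (u v x y : R) : u < v -> u < x -> x <= y -> u + v = x + y ->
  Num.sqrt (quad x) + Num.sqrt (quad y) < Num.sqrt (quad u) + Num.sqrt (quad v).
Proof.
move=> uv ux xy sum_eq.
have vu_gt0 : 0 < v - u by lra.
set lam := (v - x) / (v - u).
have lam01 : 0 < lam < 1.
  apply/andP; split; first by apply: divr_gt0; lra.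
  by rewrite ltr_pdivrMr //; lra.
have nuv : u != v by rewrite lt_eqF.
have x_conv : Num.sqrt (quad x) < lam * Num.sqrt (quad u) + (1 - lam) * Num.sqrt (quad v).
  have -> : x = lam * u + (1 - lam) * v by rewrite /lam; field; lra.
  exact: sqrt_quad_strict_convex.
have y_conv : Num.sqrt (quad y) < lam * Num.sqrt (quad v) + (1 - lam) * Num.sqrt (quad u).
  have -> : y = lam * v + (1 - lam) * u.
    have -> : y = u + v - x by lra.
    by rewrite /lam; field; lra.
  by apply: sqrt_quad_strict_convex; rewrite // eq_sym.
lra.
Qed.

End SqrtQuadratic.

Section LaneLoad.
Variables (R : rcfType) (a A B d : R).
Hypotheses (a_ge0 : 0 <= a) (a_le1 : a <= 1) (B_gt0 : 0 < B) (B_lt_A : B < A)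
  (d_gt0 : 0 < d).

Definition lane_cap (b : R) := d / (A - B * b ^+ 2).
Definition load (b : R) := (b - a) * lane_cap b.

Definition denom_at_a := A - B * a ^+ 2.
Definition load_disc (w : R) := quad (4 * B * A) (4 * B * a * d) (d ^+ 2) w.
(* The larger root in c of denom_at_a c^2 - (d + 2 B a w) c - B w^2 = 0,
   the relation between c = lane_cap b and w = load b. *)
Definition cap_at_load (w : R) :=
  (d + 2 * B * a * w + Num.sqrt (load_disc w)) / (2 * denom_at_a).

Lemma denom_gt0 (z : R) : 0 <= z <= 1 -> 0 < A - B * z ^+ 2.
Proof.
case/andP=> z_ge0 z_le1.
have z2_le1 : z ^+ 2 <= 1 by rewrite expr_le1.
have : B * z ^+ 2 <= B by apply: ler_piMr => //; apply: ltW.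
(* lra only reads the local context, not section hypotheses. *)
have := B_lt_A; lra.
Qed.

Lemma denom_at_a_gt0 : 0 < denom_at_a.
Proof. by apply: denom_gt0; rewrite a_ge0 a_le1. Qed.

Lemma load_discE (w : R) :
  load_disc w = (d + 2 * B * a * w) ^+ 2 + 4 * denom_at_a * B * w ^+ 2.
Proof. by rewrite /load_disc /quad /denom_at_a; ring. Qed.

Let disc_lead_gt0 : 0 < 4 * B * A.
Proof. by rewrite !mulr_gt0 // (lt_trans B_gt0 B_lt_A). Qed.

Let disc_det_gt0 : 0 < 4 * (4 * B * A) * d ^+ 2 - (4 * B * a * d) ^+ 2.
Proof.
have -> : 4 * (4 * B * A) * d ^+ 2 - (4 * B * a * d) ^+ 2 = 16 * B * d ^+ 2 * denom_at_a.
  by rewrite /denom_at_a; ring.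
apply: mulr_gt0; last exact: denom_at_a_gt0.
by rewrite !mulr_gt0 // exprn_gt0.
Qed.

Lemma load_disc_gt0 (w : R) : 0 < load_disc w.
Proof. exact: quad_gt0. Qed.

Lemma lane_cap_at_load (b : R) : 0 < A - B * b ^+ 2 -> lane_cap b = cap_at_load (load b).
Proof.
move=> Db_gt0.
have E_gt0 := denom_at_a_gt0.
have cap_gt0 : 0 < lane_cap b by apply: divr_gt0.
set r := 2 * denom_at_a * lane_cap b - (d + 2 * B * a * load b).
have rE : r = lane_cap b * (denom_at_a + B * (b - a) ^+ 2).
  by rewrite /r /load /lane_cap /denom_at_a; field; rewrite gt_eqF.
have r_sqr : r ^+ 2 = load_disc (load b).
  by rewrite load_discE /r /load /lane_cap /denom_at_a; field; rewrite gt_eqF.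
have r_ge0 : 0 <= r.
  rewrite rE; apply: mulr_ge0; first exact: ltW.
  by apply: addr_ge0; [exact: ltW | apply: mulr_ge0; [exact: ltW | exact: sqr_ge0]].
rewrite /cap_at_load -r_sqr sqrtr_sqr ger0_norm // /r; field; lra.
Qed.

Lemma cap_at_load_gt0 (w : R) : 0 < cap_at_load w.
Proof.
have E_gt0 := denom_at_a_gt0.
apply: divr_gt0; last lra.
have [lin_gt0 | lin_le0] := ltP 0 (d + 2 * B * a * w).
  by have := sqrtr_ge0 (load_disc w); lra.
have w_neq0 : w != 0 by apply: contraTneq lin_le0 => ->; rewrite mulr0 addr0 -ltNge.
have : `|d + 2 * B * a * w| < Num.sqrt (load_disc w).
  rewrite -sqrtr_sqr ltr_sqrt; last exact: load_disc_gt0.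
  rewrite load_discE ltrDl; apply: mulr_gt0; first by apply: mulr_gt0 => //; lra.
  by rewrite lt_neqAle eq_sym sqrf_eq0 w_neq0 sqr_ge0.
by rewrite ler0_norm //; lra.
Qed.

Lemma load_preimage (w : R) (b := a + w / cap_at_load w) :
  [/\ 0 < A - B * b ^+ 2, lane_cap b = cap_at_load w & load b = w].
Proof.
have E_gt0 := denom_at_a_gt0.
have c_gt0 := cap_at_load_gt0 w.
set c := cap_at_load w in b c_gt0 *.
have c_neq0 : c != 0 by rewrite gt_eqF.
have root_eq : 2 * denom_at_a * c - (d + 2 * B * a * w) = Num.sqrt (load_disc w).
  by rewrite /c /cap_at_load; field; lra.
have c_root : denom_at_a * c ^+ 2 - (d + 2 * B * a * w) * c - B * w ^+ 2 = 0.
  have : 4 * denom_at_a * (denom_at_a * c ^+ 2 - (d + 2 * B * a * w) * c - B * w ^+ 2) = 0.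
    have := sqr_sqrtr (ltW (load_disc_gt0 w)).
    rewrite -root_eq load_discE => /eqP; rewrite -subr_eq0 => /eqP <-; ring.
  by move/eqP; rewrite !mulf_eq0 (gt_eqF E_gt0) pnatr_eq0 /= => /eqP.
have Db : A - B * b ^+ 2 = d / c.
  apply/eqP; rewrite -subr_eq0; apply/eqP.
  have -> : A - B * b ^+ 2 - d / c
      = (denom_at_a * c ^+ 2 - (d + 2 * B * a * w) * c - B * w ^+ 2) / c ^+ 2.
    by rewrite /b /denom_at_a; field.
  by rewrite c_root mul0r.
split.
- by rewrite Db; apply: divr_gt0.
- by rewrite /lane_cap Db; field; rewrite c_neq0 gt_eqF.
- by rewrite /load /lane_cap Db /b; field; rewrite c_neq0 gt_eqF.
Qed.

Lemma load_lt (b1 b2 : R) : b1 < b2 -> 0 < A - B * b1 ^+ 2 -> 0 < A - B * b2 ^+ 2 ->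
  0 < A + B * b1 * b2 - a * B * (b1 + b2) -> load b1 < load b2.
Proof.
move=> lt12 D1_gt0 D2_gt0 K_gt0.
rewrite -subr_gt0.
have -> : load b2 - load b1 = d * (b2 - b1) * (A + B * b1 * b2 - a * B * (b1 + b2)) /
    ((A - B * b1 ^+ 2) * (A - B * b2 ^+ 2)).
  by rewrite /load /lane_cap; field; rewrite !gt_eqF.
apply: divr_gt0; last exact: mulr_gt0.
by apply: mulr_gt0 => //; apply: mulr_gt0 => //; lra.
Qed.

Lemma load_preimage_in01 (w : R) : load 0 <= w <= load 1 ->
  0 <= a + w / cap_at_load w <= 1.
Proof.
case/andP=> w_ge w_le.
have [Db_gt0 _ load_b] := load_preimage w.
move: Db_gt0 load_b; set b := a + w / cap_at_load w => Db_gt0 load_b.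
have := B_gt0; have := B_lt_A; have := a_ge0; have := a_le1 => a1 a0 BA B0.
apply/andP; split; rewrite leNgt; apply/negP => b_out.
  have : load b < load 0.
    apply: load_lt => //; first by rewrite expr0n mulr0 subr0; lra.
    rewrite mulr0 !addr0.
    have : a * B * b <= 0 by rewrite mulr_ge0_le0 ?mulr_ge0 //; lra.
    lra.
  lra.
have : load 1 < load b.
  apply: load_lt => //; first by rewrite expr1n mulr1; lra.
  have : 0 <= B * b * (1 - a) by rewrite !mulr_ge0 //; lra.
  have : a * B <= B by rewrite ler_piMl //; lra.
  lra.
lra.
Qed.

Lemma load0_lt (x : R) : 0 < x <= 1 -> load 0 < load x.
Proof.
case/andP=> x_gt0 x_le1; have := B_gt0; have := a_ge0; have := a_le1 => a1 a0 B0.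
apply: load_lt => //; try by apply: denom_gt0; rewrite ?lexx ?ler01 ?(ltW x_gt0).
have aB_le : a * B <= B by rewrite ler_piMl //; lra.
have : a * B * x <= B by apply: le_trans aB_le; rewrite ler_piMr ?mulr_ge0 //; lra.
rewrite mulr0 mul0r addr0 add0r; have := B_lt_A; lra.
Qed.

Lemma load_lt1 (y : R) : 0 <= y < 1 -> load y < load 1.
Proof.
case/andP=> y_ge0 y_lt1; have := B_gt0; have := a_le1 => a1 B0.
apply: load_lt => //; try by apply: denom_gt0; rewrite ?lexx ?ler01 ?y_ge0 ?ltW.
have : 0 <= B * y * (1 - a) by rewrite !mulr_ge0 //; lra.
have : a * B <= B by rewrite ler_piMl //; lra.
rewrite mulr1; have := B_lt_A; lra.
Qed.

Lemma cap_at_load_spread (u v x y : R) : u < v -> u < x -> x <= y -> u + v = x + y ->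
  cap_at_load x + cap_at_load y < cap_at_load u + cap_at_load v.
Proof.
move=> uv ux xy sum_eq.
have E_gt0 := denom_at_a_gt0.
have sqrt_lt : Num.sqrt (load_disc x) + Num.sqrt (load_disc y)
    < Num.sqrt (load_disc u) + Num.sqrt (load_disc v).
  exact: (sqrt_quad_spread disc_lead_gt0 disc_det_gt0).
rewrite -subr_gt0.
have -> : cap_at_load u + cap_at_load v - (cap_at_load x + cap_at_load y) =
    ((Num.sqrt (load_disc u) + Num.sqrt (load_disc v))
     - (Num.sqrt (load_disc x) + Num.sqrt (load_disc y))) / (2 * denom_at_a).
  rewrite /cap_at_load.
  have -> : 2 * B * a * v = 2 * B * a * (x + y - u) by rewrite -sum_eq; ring.
  by field; lra.
by apply: divr_gt0; lra.
Qed.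

Lemma spread_interior_pair (x y : R) : 0 < x < 1 -> 0 < y < 1 -> load x <= load y ->
  exists x' y', [/\ 0 <= x' <= 1, 0 <= y' <= 1, load x' + load y' = load x + load y &
     lane_cap x + lane_cap y < lane_cap x' + lane_cap y'].
Proof.
move=> /andP[x_gt0 x_lt1] /andP[y_gt0 y_lt1] load_xy.
have load0_lt_x : load 0 < load x by rewrite load0_lt // x_gt0 ltW.
have load_y_lt1 : load y < load 1 by rewrite load_lt1 // y_lt1 ltW.
set s := Num.min (load x - load 0) (load 1 - load y).
have s_gt0 : 0 < s by rewrite lt_min; apply/andP; split; lra.
have s_le0 : s <= load x - load 0 by rewrite ge_min lexx.
have s_le1 : s <= load 1 - load y by rewrite ge_min lexx orbT.
set u := load x - s; set v := load y + s.
have [_ cap_u load_u] := load_preimage u.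
have [_ cap_v load_v] := load_preimage v.
exists (a + u / cap_at_load u), (a + v / cap_at_load v); split.
- by apply: load_preimage_in01; apply/andP; split; rewrite /u; lra.
- by apply: load_preimage_in01; apply/andP; split; rewrite /v; lra.
- by rewrite load_u load_v /u /v; ring.
rewrite cap_u cap_v !lane_cap_at_load; first by apply: cap_at_load_spread; rewrite /u /v; lra.
  by apply: denom_gt0; rewrite ltW ?(ltW y_lt1).
by apply: denom_gt0; rewrite ltW ?(ltW x_lt1).
Qed.

End LaneLoad.

Lemma big_off2 (V : nmodType) (I : finType) (G H : I -> V) (i j : I) :
  i != j -> (forall k, k != i -> k != j -> G k = H k) ->
  \sum_k G k + (H i + H j) = \sum_k H k + (G i + G j).
Proof.
move=> nij GH; have nji : j != i by rewrite eq_sym.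
rewrite (bigD1 i) // (bigD1 j) //= [\sum_k H k](bigD1 i) // (bigD1 j) //=.
rewrite (eq_bigr H) => [|k /andP[ki kj]]; last exact: GH.
by rewrite [LHS](AC ((1*2)*2) ((4*(5*3))*(1*2))).
Qed.

Lemma capE (R : rcfType) (d L h hbar : R) :
  cap d L h hbar = lane_cap (L + h) (h - hbar) d.
Proof. by []. Qed.

Lemma maximizer_interior_load_gt (R : rcfType) (n : nat) (d L h hbar abar : R)
    (al : 'I_n -> R) (i j : 'I_n) :
  0 < d -> 0 < L -> 0 <= hbar -> hbar < h -> 0 <= abar <= 1 ->
  is_maximizer d L h hbar abar al -> i != j -> 0 < al i < 1 -> 0 < al j < 1 ->
  load abar (L + h) (h - hbar) d (al j) < load abar (L + h) (h - hbar) d (al i).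
Proof.
move=> d_gt0 L_gt0 hbar_ge0 hbar_lt /andP[abar_ge0 abar_le1] [[al01 G0] al_max] nij ali alj.
rewrite ltNge; apply/negP => load_ij.
have B_gt0 : 0 < h - hbar by rewrite subr_gt0.
have B_lt_A : h - hbar < L + h by lra.
have [x' [y' [x'01 y'01 load_eq cap_lt]]] :=
  spread_interior_pair abar_ge0 abar_le1 B_gt0 B_lt_A d_gt0 ali alj load_ij.
pose be := [eta al with i |-> x', j |-> y'].
have be_off (F : R -> R) k : k != i -> k != j -> F (be k) = F (al k).
  by move=> /negPf ki /negPf kj; rewrite /= ki kj.
have be_i : be i = x' by rewrite /= eqxx.
have be_j : be j = y' by rewrite /= eq_sym (negPf nij) eqxx.
have be_feasible : feasible d L h hbar abar be.
  split=> [k | ]; first by rewrite /=; case: (k == i); case: (k == j).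
  have := big_off2 nij (be_off (fun b => (b - abar) * cap d L h hbar b)).
  rewrite -/(Gcon _ _ _ _ _ be) -/(Gcon _ _ _ _ _ al) G0 be_i be_j.
  by move: load_eq; rewrite /load -!capE => ->; lra.
have := big_off2 nij (be_off (cap d L h hbar)).
rewrite -/(Ctot _ _ _ _ be) -/(Ctot _ _ _ _ al) be_i be_j.
have := al_max be be_feasible; rewrite !capE; lra.
Qed.

Theorem theorem1 (R : rcfType) (n : nat) (d L h hbar abar : R)
  (hn : (1 <= n)%N) (hd : 0 < d) (hL : 0 < L) (hhbar : 0 <= hbar) (hh : hbar < h)
  (habar : 0 <= abar <= 1) (al : 'I_n -> R) :
  is_maximizer d L h hbar abar al ->
  forall i j : 'I_n, 0 < al i < 1 -> 0 < al j < 1 -> i = j.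
Proof.
move=> al_max i j ali alj; have [// | nij] := eqVneq i j.
have nji : j != i by rewrite eq_sym.
have := maximizer_interior_load_gt hd hL hhbar hh habar al_max nij ali alj.
have := maximizer_interior_load_gt hd hL hhbar hh habar al_max nji alj ali.
by move=> lt_ij lt_ji; have := lt_trans lt_ij lt_ji; rewrite ltxx.
Qed.
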